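(* Let $n\ge 4$ and let $\mathcal M$ be an IP-SEG representation of the chordless cycle $C_n$ containing at least one interval segment. Then either $\mathcal M$ has exactly one interval arc, or $\mathcal M$ has exactly two interval arcs and these lie on different lines (one on $L_1$ and one on $L_2$).
   Context: Let $L_1$ and $L_2$ be two distinct parallel horizontal lines in the plane. A closed straight line segment is an interval segment if both of its endpoints lie on the same line $L_i$, and a permutation segment if one endpoint lies on $L_1$ and the other on $L_2$. An IP-SEG model is a finite family of interval and permutation segments; its intersection graph has one vertex per segment, adjacent iff the segments intersect. For $m\ge 3$, $C_m$ is the chordless cycle on $v_1,\dots,v_m$ with $v_i$ adjacent to $v_{i+1}$ (indices mod $m$) and no other edges. An IP-SEG representation of $C_m$ is an IP-SEG model with segments $s(v_1),\dots,s(v_m)$ whose intersection graph is $C_m$ with $s(v_i)$ corresponding to $v_i$. If such a representation contains both interval and permutation segments, an interval arc is a maximal sequence of cyclically consecutive segments $s(v_i),\dots,s(v_j)$ that are all interval segments (all segments of an interval arc lie on the same line). *)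

From HB Require Import structures.
From mathcomp Require Import all_boot all_order all_algebra.
Set Implicit Arguments. Unset Strict Implicit. Unset Printing Implicit Defensive.
Import Order.TTheory GRing.Theory Num.Theory.
Local Open Scope ring_scope.

Definition point (R : realFieldType) := (R * R)%type.
Definition segment (R : realFieldType) := (point R * point R)%type.

Definition on_seg (R : realFieldType) (a b p : point R) : Prop :=
  exists t : R, 0 <= t <= 1 /\
    p.1 = (1 - t) * a.1 + t * b.1 /\ p.2 = (1 - t) * a.2 + t * b.2.

Definition seg_meet (R : realFieldType) (s1 s2 : segment R) : Prop :=
  exists p : point R, on_seg s1.1 s1.2 p /\ on_seg s2.1 s2.2 p.

(* The lines L_1 : y = h1 and L_2 : y = h2 (distinct horizontal lines). *)
Definition interval_on (R : realFieldType) (h : R) (s : segment R) : Prop :=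
  s.1.2 = h /\ s.2.2 = h.

Definition is_interval_seg (R : realFieldType) (h1 h2 : R) (s : segment R) : Prop :=
  interval_on h1 s \/ interval_on h2 s.

Definition is_permutation_seg (R : realFieldType) (h1 h2 : R) (s : segment R) : Prop :=
  (s.1.2 = h1 /\ s.2.2 = h2) \/ (s.1.2 = h2 /\ s.2.2 = h1).

(* adjacency in the chordless cycle C_n on vertices 'I_n (v_{i+1} <-> i) *)
Definition cycle_adj (n : nat) (i j : 'I_n) : Prop :=
  j = ordS i \/ i = ordS j.

Definition IPSEG_rep_cycle (R : realFieldType) (h1 h2 : R) (n : nat)
    (s : 'I_n -> segment R) : Prop :=
  (forall i, is_interval_seg h1 h2 (s i) \/ is_permutation_seg h1 h2 (s i)) /\
  (forall i j : 'I_n, i <> j -> (seg_meet (s i) (s j) <-> cycle_adj i j)).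

Definition interval_arc (R : realFieldType) (h1 h2 : R) (n : nat)
    (s : 'I_n -> segment R) (A : {set 'I_n}) : Prop :=
  exists (i : 'I_n) (k : nat),
    (k < n)%N /\
    A = [set iter j (@ordS n) i | j : 'I_k.+1] /\
    (forall x, x \in A -> is_interval_seg h1 h2 (s x)) /\
    ~ is_interval_seg h1 h2 (s (ord_pred i)) /\
    ~ is_interval_seg h1 h2 (s (iter k.+1 (@ordS n) i)).

From HB Require Import structures.
From mathcomp Require Import all_boot all_order all_algebra.
From mathcomp Require Import ring lra zify.
From Stdlib Require Import Classical.
Import Order.TTheory GRing.Theory Num.Theory.
Set Implicit Arguments. Unset Strict Implicit. Unset Printing Implicit Defensive.
Local Open Scope ring_scope.

(* Write L_1 : y = h1 and L_2 : y = h2.  A segment of the strip that misses a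
   permutation segment lies strictly on one side of it, hence so does every chain of
   consecutive segments of the cycle that misses it; with a vertical separator, a chain
   of interval segments on L_1 covers the part of L_1 between any two of its points.

   Consecutive interval segments meet, so they lie on the same line: every interval arc
   lies on L_1 or on L_2, and the non-interval segments bounding it are permutation
   segments with their bottom end on the arc.  Two distinct arcs on L_1 are impossible:
   comparing their four bounding segments with the chains between them shows that the
   arcs overlap on L_1, so two non-adjacent segments meet.  Finally, not all segments are
   intervals: they would all lie on one line, and the segment whose right end is leftmost
   would be met at that end by both of its neighbours, which are not adjacent as n >= 4. *)

Section CycleIndex.
Variable n : nat.
Implicit Types (u v : 'I_n) (a b c d k : nat).

Definition idx u k := iter k (@ordS n) u.

Lemma idx0 u : idx u 0 = u. Proof. by []. Qed.

Lemma idxS u k : idx u k.+1 = ordS (idx u k). Proof. by []. Qed.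

Lemma idx_val u k : val (idx u k) = ((u + k) %% n)%N.
Proof.
elim: k => [|k IH]; first by rewrite addn0 modn_small.
by rewrite idxS /= IH -addn1 modnDml addn1 addnS.
Qed.

Lemma idx_add u a b : idx (idx u a) b = idx u (a + b).
Proof. by apply: val_inj; rewrite !idx_val modnDml addnA. Qed.

Lemma idxn u : idx u n = u.
Proof. by apply: val_inj; rewrite idx_val modnDr modn_small. Qed.

Lemma ord_pred_idxS u k : ord_pred (idx u k.+1) = idx u k.
Proof. by rewrite idxS ordSK. Qed.

Lemma ord_pred_idx u : (0 < n)%N -> ord_pred u = idx u n.-1.
Proof. by move=> n0; have := ord_pred_idxS u n.-1; rewrite prednK // idxn. Qed.

Lemma idx_inj u a b : (a < n)%N -> (b < n)%N -> idx u a = idx u b -> a = b.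
Proof.
move=> ha hb /(congr1 val); rewrite !idx_val => /eqP; rewrite eqn_modDl.
by rewrite !modn_small // => /eqP.
Qed.

Lemma idx_onto u v : exists2 d, (d < n)%N & idx u d = v.
Proof.
exists ((v + (n - u)) %% n)%N; first by rewrite ltn_mod; case: n u v => [[]|].
apply: val_inj; rewrite idx_val modnDmr.
have -> : (u + (v + (n - u)) = v + n)%N by have := ltn_ord u; lia.
by rewrite modnDr modn_small.
Qed.

Lemma idx_far u a c : (a + 2 <= c)%N -> (c + 2 <= a + n)%N ->
  idx u a <> idx u c /\ ~ cycle_adj (idx u a) (idx u c).
Proof.
move=> hac hca; set v := idx u a.
have -> : idx u c = idx v (c - a) by rewrite idx_add subnKC //; lia.
split; first by move=> /(@idx_inj v 0 (c - a) ltac:(lia) ltac:(lia)); lia.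
case=> [e | e].
- by have := @idx_inj v (c - a) 1 ltac:(lia) ltac:(lia) e; lia.
- by have := @idx_inj v 0 (c - a).+1 ltac:(lia) ltac:(lia) e; lia.
Qed.

Lemma cycle_run_exists (P : pred 'I_n) i0 m0 : P i0 -> ~~ P m0 ->
  exists i k, [/\ (k < n)%N, forall j, (j <= k)%N -> P (idx i j),
                  ~~ P (ord_pred i) & ~~ P (idx i k.+1)].
Proof.
move=> Pi0 Pm0; have [d0 d0n ed0] := idx_onto m0 i0.
have exP : exists j, P (idx m0 j) by exists d0; rewrite ed0.
have [[|d1] Pd1 min_d1] := ex_minnP exP.
  by rewrite idx0 (negbTE Pm0) in Pd1.
set i := idx m0 d1.+1.
have d1d0 : (d1 < d0)%N by apply: min_d1; rewrite ed0.
have Pi_pred : ~~ P (ord_pred i).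
  by rewrite ord_pred_idxS; apply/negP => /min_d1; rewrite ltnn.
have back_to_m0 : idx i (n - d1.+1) = m0 by rewrite idx_add subnKC ?idxn //; lia.
have exE : exists e, (0 < e)%N && ~~ P (idx i e).
  by exists (n - d1.+1)%N; rewrite back_to_m0 Pm0 andbT; lia.
have [e /andP [e_gt0 Pe] min_e] := ex_minnP exE.
have en : (e <= n - d1.+1)%N by apply: min_e; rewrite back_to_m0 Pm0 andbT; lia.
exists i, e.-1; split; [lia | | by [] | by rewrite prednK].
case=> [|j] hj //; apply/negPn/negP => Pj.
by have := min_e j.+1 Pj; lia.
Qed.

Definition run u k : {set 'I_n} := [set idx u j | j : 'I_k.+1].

Lemma mem_run u k j : (j <= k)%N -> idx u j \in run u k.
Proof. by move=> hj; apply/imsetP; exists (Ordinal (hj : (j < k.+1)%N)). Qed.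

Lemma runP u k x : x \in run u k -> exists2 j, (j <= k)%N & x = idx u j.
Proof. by case/imsetP => j _ ->; exists j; first by rewrite -ltnS. Qed.

End CycleIndex.

Lemma same_sign_trans (R : realDomainType) (x y z : R) :
  0 < x * y -> 0 < y * z -> 0 < x * z.
Proof.
move=> hxy hyz; have y0 : y != 0 by apply: contraTneq hxy => ->; rewrite mulr0 ltxx.
have : 0 < (x * z) * (y * y) by rewrite mulrACA [z * y]mulrC mulr_gt0.
by rewrite pmulr_lgt0 // -expr2 exprn_even_gt0.
Qed.

Lemma convex_comb_pos (R : realDomainType) (x y t : R) :
  0 <= t <= 1 -> 0 < x -> 0 < y -> 0 < (1 - t) * x + t * y.
Proof.
move=> /andP [t0 t1] hx hy; have hx' : 0 <= (1 - t) * x by rewrite mulr_ge0 ?subr_ge0 // ltW.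
have [t_pos | t_le0] := ltrP 0 t; first by have := mulr_gt0 t_pos hy; lra.
have -> : t = 0 by lra.
by rewrite subr0 mul1r mul0r addr0.
Qed.

Lemma affine_root (R : realFieldType) (x y : R) :
  x * y < 0 -> exists2 t, 0 <= t <= 1 & (1 - t) * x + t * y = 0.
Proof.
move=> hxy; have xx : 0 <= x * x by rewrite -expr2 sqr_ge0.
have D_gt0 : 0 < x * x - x * y by lra.
exists (x * x / (x * x - x * y)); last by field; rewrite gt_eqF.
by apply/andP; split; [apply: divr_ge0 | rewrite ler_pdivrMr // mul1r]; lra.
Qed.

Lemma overlap_point (R : realDomainType) (a c a' c' : R) :
  0 < (a - c) * (a' - c) -> 0 < (c' - a) * (c - a) ->
  exists X, (a - X) * (c - X) <= 0 /\ (a' - X) * (c' - X) <= 0.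
Proof.
move=> H1 H2; have [ca | ac | ca] := ltrgtP c a; last by rewrite ca subrr mul0r ltxx in H1.
- move: H1 H2; rewrite pmulr_rgt0 ?subr_gt0 // nmulr_lgt0 ?subr_lt0 // => ca' c'a.
  have [a'a | aa'] := lerP a' a; [exists a' | exists a]; rewrite subrr ?mul0r ?mulr0.
    by split=> //; apply: mulr_ge0_le0; lra.
  by split=> //; apply: mulr_ge0_le0; lra.
- move: H1 H2; rewrite nmulr_rgt0 ?subr_lt0 // pmulr_lgt0 ?subr_gt0 // => ca' c'a.
  have [aa' | a'a] := lerP a a'; [exists a' | exists a]; rewrite subrr ?mul0r ?mulr0.
    by split=> //; apply: mulr_le0_ge0; lra.
  by split=> //; apply: mulr_le0_ge0; lra.
Qed.

Lemma on_seg_left (R : realFieldType) (a c : point R) : on_seg a c a.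
Proof. by exists 0; rewrite lexx ler01; split=> //; split; ring. Qed.

Lemma on_seg_right (R : realFieldType) (a c : point R) : on_seg a c c.
Proof. by exists 1; rewrite lexx ler01; split=> //; split; ring. Qed.

Lemma on_seg_sym (R : realFieldType) (a c p : point R) : on_seg a c p -> on_seg c a p.
Proof.
move=> [t [/andP [t0 t1] [hx hy]]]; exists (1 - t).
by rewrite hx hy; split; [apply/andP; split; lra | split; ring].
Qed.

Lemma seg_meet_sym (R : realFieldType) (r r' : segment R) : seg_meet r r' -> seg_meet r' r.
Proof. by move=> [p [hr hr']]; exists p. Qed.

Definition right_end (R : realFieldType) (r : segment R) : R := Order.max r.1.1 r.2.1.

Lemma le_right_end (R : realFieldType) (r : segment R) p :
  on_seg r.1 r.2 p -> p.1 <= right_end r.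
Proof.
move=> [t [/andP [t0 t1] [-> _]]]; rewrite /right_end.
set M := Order.max _ _.
have ha : (1 - t) * r.1.1 <= (1 - t) * M by rewrite ler_wpM2l ?subr_ge0 // le_max lexx.
have hc : t * r.2.1 <= t * M by rewrite ler_wpM2l // le_max lexx orbT.
lra.
Qed.

Lemma right_end_on (R : realFieldType) (r : segment R) :
  exists2 e, on_seg r.1 r.2 e & e.1 = right_end r.
Proof.
rewrite /right_end; case: leP => _; [exists r.2 | exists r.1] => //.
  exact: on_seg_right.
exact: on_seg_left.
Qed.

Definition interval_segb (R : realFieldType) (h1 h2 : R) (r : segment R) : bool :=
  [&& r.1.2 == h1 & r.2.2 == h1] || [&& r.1.2 == h2 & r.2.2 == h2].

Lemma interval_segP (R : realFieldType) (h1 h2 : R) (r : segment R) :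
  reflect (is_interval_seg h1 h2 r) (interval_segb h1 h2 r).
Proof.
apply: (iffP orP) => [[] /andP [/eqP e1 /eqP e2] | [] [-> ->]].
- by left.
- by right.
- by rewrite !eqxx; left.
- by rewrite !eqxx; right.
Qed.

Section Strip.
Variables (R : realFieldType) (h1 h2 : R).
Hypothesis h12 : h1 != h2.

Definition in_strip (p : point R) := p.2 = h1 \/ p.2 = h2.

Definition separator (b t : R) : segment R := ((b, h1), (t, h2)).

(* [level] is 0 on L_1 and 1 on L_2; [side b t] is affine and vanishes
   exactly on the line carrying [separator b t]. *)
Definition level (p : point R) := (p.2 - h1) / (h2 - h1).
Definition side (b t : R) (p : point R) := p.1 - b - (t - b) * level p.

Let h21_neq0 : h2 - h1 != 0. Proof. by rewrite subr_eq0 eq_sym. Qed.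

Lemma level_comb (a c p : point R) l :
  p.2 = (1 - l) * a.2 + l * c.2 -> level p = (1 - l) * level a + l * level c.
Proof. by move=> hy; rewrite /level hy; field; apply: h21_neq0. Qed.

Lemma side_comb b t (a c p : point R) l :
  p.1 = (1 - l) * a.1 + l * c.1 -> p.2 = (1 - l) * a.2 + l * c.2 ->
  side b t p = (1 - l) * side b t a + l * side b t c.
Proof. by move=> hx hy; rewrite /side (level_comb hy) hx; ring. Qed.

Lemma side_L1 b t x : side b t (x, h1) = x - b.
Proof. by rewrite /side /level subrr mul0r mulr0 subr0. Qed.

Lemma side_vertical X p : side X X p = p.1 - X.
Proof. by rewrite /side subrr mul0r subr0. Qed.

Lemma level_strip_seg (a c p : point R) :
  in_strip a -> in_strip c -> on_seg a c p -> 0 <= level p <= 1.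
Proof.
have level01 q : in_strip q -> level q = 0 \/ level q = 1.
  rewrite /level => -[] ->; [left | right]; first by rewrite subrr mul0r.
  by rewrite divff // h21_neq0.
move=> /level01 ha /level01 hc [l [/andP [l0 l1] [_ /level_comb ->]]].
by case: ha => ->; case: hc => ->; apply/andP; split; lra.
Qed.

Lemma on_separator b t p :
  0 <= level p <= 1 -> side b t p = 0 -> on_seg (b, h1) (t, h2) p.
Proof.
move=> hl hside; exists (level p); split=> //=; split.
  by move: hside; rewrite /side => /eqP; rewrite subr_eq0 subr_eq => /eqP ->; ring.
by rewrite /level; field; apply: h21_neq0.
Qed.

Lemma strip_seg_same_side (r : segment R) b t p q :
  in_strip r.1 -> in_strip r.2 -> ~ seg_meet r (separator b t) ->
  on_seg r.1 r.2 p -> on_seg r.1 r.2 q -> 0 < side b t p * side b t q.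
Proof.
move=> s1 s2 miss.
have zero_free x : on_seg r.1 r.2 x -> side b t x != 0.
  move=> hx; apply/eqP => hx0; apply: miss; exists x; split=> //.
  exact: on_separator (level_strip_seg s1 s2 hx) hx0.
set va := side b t r.1; set vc := side b t r.2.
have va0 : va != 0 by apply/zero_free/on_seg_left.
have va_vc : 0 < va * vc.
  have := mulf_neq0 va0 (zero_free _ (on_seg_right r.1 r.2)).
  rewrite neq_lt => /orP [neg | //]; have [l hl root] := affine_root neg.
  pose P : point R := ((1 - l) * r.1.1 + l * r.2.1, (1 - l) * r.1.2 + l * r.2.2).
  have hP : on_seg r.1 r.2 P by exists l.
  by move: (zero_free _ hP); rewrite (side_comb b t (erefl P.1) (erefl P.2)) root eqxx.
have sign_va x : on_seg r.1 r.2 x -> 0 < side b t x * va.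
  move=> [l [hl [hx hy]]]; rewrite (side_comb b t hx hy) mulrDl -!mulrA.
  by apply: convex_comb_pos; rewrite // ?[vc * _]mulrC // -expr2 exprn_even_gt0.
by move=> hp hq; apply: (same_sign_trans (sign_va p hp)); rewrite mulrC sign_va.
Qed.

Lemma interval_y h (r : segment R) p : interval_on h r -> on_seg r.1 r.2 p -> p.2 = h.
Proof. by move=> [e1 e2] [l [_ [_ ->]]]; rewrite e1 e2; ring. Qed.

Lemma interval_lines_disjoint (r r' : segment R) :
  interval_on h1 r -> interval_on h2 r' -> ~ seg_meet r r'.
Proof.
move=> hr hr' [p [hp hp']]; move: h12.
by rewrite -(interval_y hr hp) -(interval_y hr' hp') eqxx.
Qed.

Lemma separator_meets_L1_at_bottom b t (p : point R) :
  p.2 = h1 -> on_seg (b, h1) (t, h2) p -> p = (b, h1).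
Proof.
case: p => x y /= -> [l [_ [/= -> hy]]].
have : l * (h2 - h1) = 0 by lra.
by move/eqP; rewrite mulf_eq0 (negbTE h21_neq0) orbF => /eqP ->; congr (_, _); ring.
Qed.

Lemma permutation_seg_separator (q : segment R) : is_permutation_seg h1 h2 q ->
  exists b t, forall p, on_seg q.1 q.2 p <-> on_seg (b, h1) (t, h2) p.
Proof.
case: q => [[x1 y1] [x2 y2]] [[/= -> ->] | [/= -> ->]]; first by exists x1, x2.
by exists x2, x1 => p; split => /on_seg_sym.
Qed.

Section Cycle.
Variables (n : nat) (s : 'I_n -> segment R).
Hypotheses (rep : IPSEG_rep_cycle h1 h2 s) (n4 : (4 <= n)%N).

Lemma seg_in_strip i : in_strip (s i).1 /\ in_strip (s i).2.
Proof.
have [segs _] := rep; rewrite /in_strip.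
by case: (segs i) => [[[-> ->] | [-> ->]] | [[-> ->] | [-> ->]]]; split; auto.
Qed.

Lemma meet_next u j : seg_meet (s (idx u j)) (s (idx u j.+1)).
Proof.
have [_ adj] := rep; apply/adj; last by left.
by move=> e; have := @idx_inj _ (idx u j) 0 1 ltac:(lia) ltac:(lia) e.
Qed.

Lemma no_meet_far u a c : (a + 2 <= c)%N -> (c + 2 <= a + n)%N ->
  ~ seg_meet (s (idx u a)) (s (idx u c)).
Proof.
move=> hac hca; have [_ adj] := rep; have [ne not_adj] := idx_far u hac hca.
by move/(adj _ _ ne).
Qed.

Lemma chain_same_side u b t a c j1 j2 x y :
  (forall j, (a <= j <= c)%N -> ~ seg_meet (s (idx u j)) (separator b t)) ->
  (a <= j1 <= c)%N -> (a <= j2 <= c)%N ->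
  on_seg (s (idx u j1)).1 (s (idx u j1)).2 x -> on_seg (s (idx u j2)).1 (s (idx u j2)).2 y ->
  0 < side b t x * side b t y.
Proof.
move=> miss hj1 hj2 hx hy.
have seg_side j p q : (a <= j <= c)%N -> on_seg (s (idx u j)).1 (s (idx u j)).2 p ->
    on_seg (s (idx u j)).1 (s (idx u j)).2 q -> 0 < side b t p * side b t q.
  by move=> hj; have [s1 s2] := seg_in_strip (idx u j); apply: strip_seg_same_side s1 s2 (miss j hj).
pose x0 := (s (idx u a)).1.
have from_x0 j p : (a <= j <= c)%N -> on_seg (s (idx u j)).1 (s (idx u j)).2 p ->
    0 < side b t x0 * side b t p.
  move=> /andP [aj]; have [m ->] : exists m, j = (a + m)%N by exists (j - a)%N; lia.
  elim: m p => [|m IH] p hm hp.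
    by rewrite addn0 in hp; apply: (seg_side a) => //; [lia | exact: on_seg_left].
  have [P [P1 P2]] := meet_next u (a + m).
  rewrite addnS in hm hp; apply: (same_sign_trans (IH P _ P1)); first lia.
  by apply: (seg_side (a + m).+1) => //; lia.
have x0x := from_x0 _ _ hj1 hx; have x0y := from_x0 _ _ hj2 hy.
by apply: same_sign_trans x0y; rewrite mulrC.
Qed.

(* Otherwise the vertical segment through (X, h1) would separate x from y. *)
Lemma L1_chain_covers u a c X j1 j2 x y :
  (forall j, (a <= j <= c)%N -> interval_on h1 (s (idx u j))) ->
  (a <= j1 <= c)%N -> (a <= j2 <= c)%N ->
  on_seg (s (idx u j1)).1 (s (idx u j1)).2 x -> on_seg (s (idx u j2)).1 (s (idx u j2)).2 y ->
  (x.1 - X) * (y.1 - X) <= 0 ->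
  exists2 j, (a <= j <= c)%N & on_seg (s (idx u j)).1 (s (idx u j)).2 (X, h1).
Proof.
move=> L1 hj1 hj2 hx hy between; apply: NNPP => none.
suff : 0 < side X X x * side X X y by rewrite !side_vertical; lra.
apply: chain_same_side hj1 hj2 hx hy => j hj [P [P1 P2]].
apply: none; exists j => //.
by rewrite -(separator_meets_L1_at_bottom (interval_y (L1 j hj) P1) P2).
Qed.

Lemma all_L1_absurd : ~ (forall i, interval_on h1 (s i)).
Proof.
move=> L1; have u : 'I_n := Ordinal (ltn_trans (isT : (0 < 3)%N) n4).
have [i _ min_i] := @arg_minP _ _ _ u xpredT (fun i => right_end (s i)) isT.
set X := right_end (s i).
have covers j : seg_meet (s i) (s j) -> on_seg (s j).1 (s j).2 (X, h1).
  move=> [P [Pi Pj]]; have [E Ej EX] := right_end_on (s j).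
  have PX : P.1 - X <= 0 by rewrite subr_le0 le_right_end.
  have XE : 0 <= E.1 - X by rewrite subr_ge0 EX min_i.
  by have [[|j'] //] := @L1_chain_covers j 0 0 X 0 0 P E (fun j _ => L1 _) isT isT Pj Ej
    (mulr_le0_ge0 PX XE).
have m_prev : seg_meet (s i) (s (idx i n.-1)).
  by apply: seg_meet_sym; have := meet_next i n.-1; rewrite prednK ?idxn //; lia.
apply: (@no_meet_far i 1 n.-1); try lia.
by exists (X, h1); split; apply: covers; [exact: meet_next i 0 | exact: m_prev].
Qed.

Lemma boundary_separator i j :
  interval_on h1 (s i) -> seg_meet (s i) (s j) -> ~ interval_on h1 (s j) ->
  exists b t, [/\ on_seg (s i).1 (s i).2 (b, h1), on_seg (s j).1 (s j).2 (b, h1)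
              & forall r, seg_meet r (s j) <-> seg_meet r (separator b t)].
Proof.
move=> Li meet notLj; have [segs _] := rep.
have perm : is_permutation_seg h1 h2 (s j).
  by case: (segs j) => [[//|L2j] | //]; case: (interval_lines_disjoint Li L2j meet).
have [b [t same]] := permutation_seg_separator perm.
have [P [Pi Pj]] := meet.
have eP := separator_meets_L1_at_bottom (interval_y Li Pi) (iffLR (same P) Pj).
exists b, t; split; [by rewrite -eP | by rewrite -eP |].
by move=> r; split=> -[p [hr hp]]; exists p; split=> //; apply/same.
Qed.

(* The chains between the runs [0, k] and [d, d + k'] show that the bottom ends of
   the four bounding permutation segments interleave, so both runs cover a common
   point X of L_1, although their segments are far apart in the cycle. *)
Lemma two_L1_runs_absurd u k d k' : (k.+2 <= d)%N -> (d + k'.+2 <= n)%N ->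
  (forall j, (j <= k)%N -> interval_on h1 (s (idx u j))) ->
  (forall j, (d <= j <= d + k')%N -> interval_on h1 (s (idx u j))) ->
  ~ interval_on h1 (s (idx u k.+1)) -> ~ interval_on h1 (s (idx u d.-1)) ->
  ~ interval_on h1 (s (idx u (d + k').+1)) -> ~ interval_on h1 (s (idx u n.-1)) -> False.
Proof.
move=> kd dn LA LC nAr nCl nCr nAl.
have meet_prev j : (0 < j)%N -> seg_meet (s (idx u j)) (s (idx u j.-1)).
  by move=> j0; apply: seg_meet_sym; have := meet_next u j.-1; rewrite prednK.
have [bAr [tAr [Ak Ar MAr]]] := boundary_separator (LA k (leqnn k)) (meet_next u k) nAr.
have [bCl [tCl [Cd Cl MCl]]] :=
  boundary_separator (LC d ltac:(lia)) (meet_prev d ltac:(lia)) nCl.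
have [bCr [tCr [Cdk Cr MCr]]] :=
  boundary_separator (LC (d + k')%N ltac:(lia)) (meet_next u (d + k')) nCr.
have [bAl [tAl [A0 Al MAl]]] :
    exists b t, [/\ on_seg (s (idx u 0)).1 (s (idx u 0)).2 (b, h1),
      on_seg (s (idx u n.-1)).1 (s (idx u n.-1)).2 (b, h1)
      & forall r, seg_meet r (s (idx u n.-1)) <-> seg_meet r (separator b t)].
  by apply: boundary_separator (LA 0%N isT) _ nAl; rewrite -{1}(idxn u); apply: meet_prev; lia.
have between_C : 0 < (bAr - bAl) * (bCl - bAl).
  rewrite -!(side_L1 bAl tAl); apply: (chain_same_side (a := k.+1) (c := d.-1)) Ar Cl; try lia.
  by move=> j hj /MAl; apply: no_meet_far; lia.
have between_A : 0 < (bCr - bAr) * (bAl - bAr).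
  rewrite -!(side_L1 bAr tAr); apply: (chain_same_side (a := (d + k').+1) (c := n.-1)) Cr Al; try lia.
  by move=> j hj /MAr /seg_meet_sym; apply: no_meet_far; lia.
have [X [XA XC]] := overlap_point between_C between_A.
have [ja hja Xa] : exists2 j, (0 <= j <= k)%N & on_seg (s (idx u j)).1 (s (idx u j)).2 (X, h1).
  apply: (L1_chain_covers (fun j hj => LA j (proj2 (andP hj))) _ _ A0 Ak); rewrite ?leqnn //.
  by rewrite /= mulrC.
have [jb hjb Xb] : exists2 j, (d <= j <= d + k')%N & on_seg (s (idx u j)).1 (s (idx u j)).2 (X, h1).
  by apply: (L1_chain_covers LC _ _ Cd Cdk XC); lia.
by apply: (@no_meet_far u ja jb); try lia; exists (X, h1).
Qed.

Lemma run_on_L1 u k : interval_on h1 (s u) ->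
  (forall j, (j <= k)%N -> is_interval_seg h1 h2 (s (idx u j))) ->
  forall j, (j <= k)%N -> interval_on h1 (s (idx u j)).
Proof.
move=> Lu I; elim=> [|j IH] hj //.
case: (I _ hj) => // L2; case: (interval_lines_disjoint (IH (ltnW hj)) L2 (meet_next u j)).
Qed.

Lemma arcP A : interval_arc h1 h2 s A -> exists i k, [/\ (k < n)%N, A = run i k,
    forall j, (j <= k)%N -> is_interval_seg h1 h2 (s (idx i j)),
    ~ is_interval_seg h1 h2 (s (ord_pred i)) & ~ is_interval_seg h1 h2 (s (idx i k.+1))].
Proof.
move=> [i [k [kn [eA [I [nIl nIr]]]]]]; change (A = run i k) in eA.
by exists i, k; split=> // j hj; apply: I; rewrite eA mem_run.
Qed.

Lemma L1_arcs_eq A C : interval_arc h1 h2 s A -> interval_arc h1 h2 s C ->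
  (forall x, x \in A -> interval_on h1 (s x)) -> (forall x, x \in C -> interval_on h1 (s x)) ->
  A = C.
Proof.
move=> /arcP [i [k [kn -> IA nAl nAr]]] /arcP [i' [k' [k'n -> IC nCl nCr]]] LA LC.
have [d dn ei'] := idx_onto i i'; subst i'.
have LA' j : (j <= k)%N -> interval_on h1 (s (idx i j)) by move=> hj; apply: LA; exact: mem_run.
have LC' j : (j <= k')%N -> interval_on h1 (s (idx i (d + j))).
  by move=> hj; rewrite -idx_add; apply: LC; exact: mem_run.
case: d dn LC LC' IC nCl nCr => [|d] dn LC LC' IC nCl nCr.
  suff -> : k' = k by [].
  by case: (ltngtP k k') => // [lt | gt]; [case: nAr; apply: IC | case: nCr; apply: IA].
rewrite ord_pred_idxS in nCl; rewrite idx_add addnS in nCr.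
rewrite ord_pred_idx in nAl; last by lia.
have kd : (k.+2 <= d.+1)%N.
  by rewrite ltnS ltnNge; apply/negP => dk; case: nCl; apply: IA.
have dk' : (d.+1 + k'.+2 <= n)%N.
  rewrite leqNgt; apply/negP => big; case: nAl.
  have -> : n.-1 = (d.+1 + (n.-1 - d.+1))%N by lia.
  by rewrite -idx_add; apply: IC; lia.
exfalso; apply: (two_L1_runs_absurd kd dk' LA').
- by move=> j /andP [dj jk]; rewrite -(subnKC dj); apply: LC'; lia.
- by move=> L; apply: nAr; left.
- by move=> L; apply: nCl; left.
- by move=> L; apply: nCr; left.
- by move=> L; apply: nAl; left.
Qed.

End Cycle.

End Strip.

Lemma IPSEG_rep_swap (R : realFieldType) (h1 h2 : R) n (s : 'I_n -> segment R) :
  IPSEG_rep_cycle h1 h2 s -> IPSEG_rep_cycle h2 h1 s.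
Proof.
move=> [segs adj]; split=> // i.
by move: (segs i); rewrite /is_interval_seg /is_permutation_seg; tauto.
Qed.

Lemma is_interval_seg_swap (R : realFieldType) (h1 h2 : R) (r : segment R) :
  is_interval_seg h1 h2 r <-> is_interval_seg h2 h1 r.
Proof. by rewrite /is_interval_seg; tauto. Qed.

Lemma interval_arc_swap (R : realFieldType) (h1 h2 : R) n (s : 'I_n -> segment R) A :
  interval_arc h1 h2 s A -> interval_arc h2 h1 s A.
Proof.
move=> [i [k [kn [eA [I [nIl nIr]]]]]]; exists i, k.
do 3!split=> //; first by move=> x /I /is_interval_seg_swap.
by split=> /is_interval_seg_swap; [exact: nIl | exact: nIr].
Qed.

Section Arcs.
Variables (R : realFieldType) (h1 h2 : R) (n : nat) (s : 'I_n -> segment R).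
Hypotheses (h12 : h1 != h2) (rep : IPSEG_rep_cycle h1 h2 s) (n4 : (4 <= n)%N).

Let h21 : h2 != h1. Proof. by rewrite eq_sym. Qed.
Let rep21 : IPSEG_rep_cycle h2 h1 s. Proof. exact: IPSEG_rep_swap. Qed.

Lemma exists_non_interval : exists m, ~ is_interval_seg h1 h2 (s m).
Proof.
apply: NNPP => none; have all_int i : is_interval_seg h1 h2 (s i).
  by apply: NNPP => ni; apply: none; exists i.
have u : 'I_n := Ordinal (ltn_trans (isT : (0 < 3)%N) n4).
case: (all_int u) => Lu.
  apply: (all_L1_absurd h12 rep n4) => v; have [d _ <-] := idx_onto u v.
  by apply: (run_on_L1 h12 rep n4 Lu (k := d)) => // j _; apply: all_int.
apply: (all_L1_absurd h21 rep21 n4) => v; have [d _ <-] := idx_onto u v.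
by apply: (run_on_L1 h21 rep21 n4 Lu (k := d)) => // j _; apply/is_interval_seg_swap/all_int.
Qed.

Lemma arc_exists i0 m0 : is_interval_seg h1 h2 (s i0) -> ~ is_interval_seg h1 h2 (s m0) ->
  exists A, interval_arc h1 h2 s A.
Proof.
move=> /interval_segP Ii0 /(introN (interval_segP _ _ _)) nIm0.
have [i [k [kn I nIl nIr]]] := cycle_run_exists (P := fun x => interval_segb h1 h2 (s x)) Ii0 nIm0.
exists (run i k), i, k; do 3!split=> //.
  by move=> x /runP [j hj ->]; apply/interval_segP/I.
by split=> /interval_segP; apply/negP.
Qed.

Lemma arc_nonempty A : interval_arc h1 h2 s A -> exists x, x \in A.
Proof. by move=> /arcP [i [k [_ -> _ _ _]]]; exists i; exact: (mem_run i (leq0n k)). Qed.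

Lemma L2_arcs_eq A C : interval_arc h1 h2 s A -> interval_arc h1 h2 s C ->
  (forall x, x \in A -> interval_on h2 (s x)) -> (forall x, x \in C -> interval_on h2 (s x)) ->
  A = C.
Proof. by move=> /interval_arc_swap arcA /interval_arc_swap arcC; apply: L1_arcs_eq arcA arcC. Qed.

Lemma arc_on_line A : interval_arc h1 h2 s A ->
  (forall x, x \in A -> interval_on h1 (s x)) \/ (forall x, x \in A -> interval_on h2 (s x)).
Proof.
move=> /arcP [i [k [_ -> I _ _]]].
case: (I 0%N isT) => Li; [left | right] => x /runP [j hj ->].
  exact: (run_on_L1 h12 rep n4 Li I).
by apply: (run_on_L1 h21 rep21 n4 Li _ hj) => j' hj'; apply/is_interval_seg_swap/I.
Qed.

End Arcs.

Theorem mainTheorem6 (R : realFieldType) (h1 h2 : R) (n : nat)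
    (s : 'I_n -> segment R) :
  h1 != h2 ->
  (4 <= n)%N ->
  IPSEG_rep_cycle h1 h2 s ->
  (exists i : 'I_n, is_interval_seg h1 h2 (s i)) ->
  (exists A : {set 'I_n},
      interval_arc h1 h2 s A /\
      forall C, interval_arc h1 h2 s C -> C = A)
  \/
  (exists A B : {set 'I_n},
      A <> B /\ interval_arc h1 h2 s A /\ interval_arc h1 h2 s B /\
      (forall C, interval_arc h1 h2 s C -> C = A \/ C = B) /\
      (forall x, x \in A -> interval_on h1 (s x)) /\
      (forall x, x \in B -> interval_on h2 (s x))).
Proof.
move=> h12 n4 rep [i0 Ii0].
have [m0 nIm0] := exists_non_interval h12 rep n4.
have [A0 arcA0] := arc_exists Ii0 nIm0.
pose on_line h A := interval_arc h1 h2 s A /\ forall x, x \in A -> interval_on h (s x).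
have line C : interval_arc h1 h2 s C -> on_line h1 C \/ on_line h2 C.
  by move=> arcC; case: (arc_on_line h12 rep n4 arcC); [left | right].
have eq1 A C : on_line h1 A -> on_line h1 C -> C = A.
  by move=> [arcA LA] [arcC LC]; apply: (L1_arcs_eq h12 rep n4).
have eq2 A C : on_line h2 A -> on_line h2 C -> C = A.
  by move=> [arcA LA] [arcC LC]; apply: (L2_arcs_eq h12 rep n4).
case: (classic (exists A, on_line h1 A)) => [[A LA] | no1];
  case: (classic (exists B, on_line h2 B)) => [[B LB] | no2].
- right; exists A, B; have [arcA LA1] := LA; have [arcB LB2] := LB; do !split=> //.
    move=> AB; have [x xA] := arc_nonempty arcA.
    by move: h12; rewrite -(LA1 x xA).1 (LB2 x _).1 ?eqxx // -AB.
  by move=> C /line [/(eq1 _ _ LA) -> | /(eq2 _ _ LB) ->]; [left | right].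
- left; exists A; split; first by case: LA.
  by move=> C /line [/(eq1 _ _ LA) -> // | LC]; case: no2; exists C.
- left; exists B; split; first by case: LB.
  by move=> C /line [LC | /(eq2 _ _ LB) -> //]; case: no1; exists C.
- by case: (line _ arcA0) => L; [case: no1 | case: no2]; exists A0.
Qed.
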